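(* Let $G$ be a torsion-free nilpotent group with Hirsch length $h$, and let $x_1,\ldots,x_h$ be a generating set of $G$ such that every $g\in G$ can be written uniquely as $g=x_1^{\ell_1}\cdots x_h^{\ell_h}$ with $\ell_i\in\mathbb{Z}$, and $[x_i,x_j]\in\langle x_{j+1},\ldots,x_h\rangle$ whenever $1\le i<j\le h$. Suppose further that for some positive integers $q_1,\ldots,q_h$ the set $H=\{x_1^{q_1\ell_1}\cdots x_h^{q_h\ell_h}:\ell_i\in\mathbb{Z}\}$ is a subgroup of $G$. Then the set $X=\{x_1^{k_1}\cdots x_h^{k_h}:0\le k_i<q_i\}$ contains exactly one element from each left coset $gH$ of $H$ in $G$.
   Context: $[x,y]=x^{-1}y^{-1}xy$. *)

From Stdlib Require Import ZArith Arith Lia List.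
Open Scope Z_scope.

Record Group := {
  carrier :> Type;
  gmul : carrier -> carrier -> carrier;
  gone : carrier;
  ginv : carrier -> carrier;
  gmulA : forall a b c, gmul a (gmul b c) = gmul (gmul a b) c;
  gmul1l : forall a, gmul gone a = a;
  gmul1r : forall a, gmul a gone = a;
  gmulVl : forall a, gmul (ginv a) a = gone;
  gmulVr : forall a, gmul a (ginv a) = gone
}.

Section GroupDefs.
Variable G : Group.

Definition npow (x : G) (n : nat) : G := Nat.iter n (fun y => gmul G y x) (gone G).

Definition zpow (x : G) (n : Z) : G :=
  match n with
  | Z0 => gone G
  | Zpos p => npow x (Pos.to_nat p)
  | Zneg p => npow (ginv G x) (Pos.to_nat p)
  end.

Definition comm (x y : G) : G :=
  gmul G (gmul G (gmul G (ginv G x) (ginv G y)) x) y.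

Definition is_subgroup (K : G -> Prop) : Prop :=
  K (gone G) /\ (forall a b, K a -> K b -> K (gmul G a b)) /\
  (forall a, K a -> K (ginv G a)).

Definition gen (S : G -> Prop) : G -> Prop :=
  fun g => forall K, is_subgroup K -> (forall s, S s -> K s) -> K g.

Fixpoint lcs (i : nat) : G -> Prop :=
  match i with
  | O => fun _ => True
  | S i' => gen (fun c => exists a b, lcs i' b /\ c = comm a b)
  end.

Definition nilpotent : Prop :=
  exists n, forall g, lcs n g -> g = gone G.

Definition torsion_free : Prop :=
  forall (g : G) (n : nat), (0 < n)%nat -> npow g n = gone G -> g = gone G.

(* A (finite) subnormal series G = N 0 >= N 1 >= ... >= N m = 1 with cyclic
   factors N i / N (i+1) generated by the image of t i; inf i records whether
   the factor is infinite cyclic. *)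
Definition cyclic_series (m : nat) (N : nat -> G -> Prop) (t : nat -> G)
    (inf : nat -> bool) : Prop :=
  (forall g, N O g) /\ (forall g, N m g -> g = gone G) /\
  forall i, (i < m)%nat ->
    is_subgroup (N i) /\ is_subgroup (N (S i)) /\
    (forall g, N (S i) g -> N i g) /\
    (forall g a, N (S i) g -> N i a ->
       N (S i) (gmul G (gmul G (ginv G a) g) a)) /\
    N i (t i) /\
    (forall g, N i g -> exists k, N (S i) (gmul G (zpow (t i) (- k)) g)) /\
    (inf i = true <-> forall k, k <> 0 -> ~ N (S i) (zpow (t i) k)).

(* Hirsch length: number of infinite cyclic factors in a polycyclic series
   (independent of the series). *)
Definition hirsch_length (h : nat) : Prop :=
  exists m N t inf, cyclic_series m N t inf /\
    h = fold_right (fun i acc => (if inf i then 1 else 0) + acc)%nat O (seq 0 m).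

Fixpoint word (x : nat -> G) (l : nat -> Z) (n : nat) : G :=
  match n with
  | O => gone G
  | S n' => gmul G (word x l n') (zpow (x n') (l n'))
  end.

End GroupDefs.

(* Work with the tail sets T_m = { x_m^l_m ... x_(h-1)^l_(h-1) }.  Downward
   induction on m, using [x_i, x_j] in T_(j+1), shows that each T_m is a
   subgroup normalised by x_0, ..., x_(m-1); hence T_m = x_m^Z T_(m+1) with
   T_(m+1) normal in T_m.  Writing the leading exponent a = k + q_m t with
   0 <= k < q_m and moving x_m^(q_m t), which lies in H, to the right through
   T_(m+1) gives a coset representative.  Conversely, if two representatives
   x_m^a d and x_m^b d' lie in the same coset of H, then x_m^(b-a) times an
   element of T_(m+1) lies in H, so uniqueness of normal forms forces
   q_m | b - a, i.e. a = b, and one recurses on d, d'. *)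
From Stdlib Require Import ZArith Arith Lia.
Open Scope Z_scope.

Arguments gmul {_}. Arguments gone {_}. Arguments ginv {_}.

Section Groups.

Variable G : Group.

Lemma mulgKV (a b : G) : gmul (gmul a (ginv b)) b = a.
Proof. rewrite <- gmulA, gmulVl, gmul1r. reflexivity. Qed.

Lemma mulgVK (a b : G) : gmul (gmul a b) (ginv b) = a.
Proof. rewrite <- gmulA, gmulVr, gmul1r. reflexivity. Qed.

Lemma invg_unique (a b : G) : gmul a b = gone -> ginv a = b.
Proof.
  intros E. rewrite <- (gmul1r _ (ginv a)), <- E, gmulA, gmulVl, gmul1l.
  reflexivity.
Qed.

Lemma invgK (a : G) : ginv (ginv a) = a.
Proof. apply invg_unique, gmulVl. Qed.

Lemma invgM (a b : G) : ginv (gmul a b) = gmul (ginv b) (ginv a).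
Proof. apply invg_unique. rewrite gmulA, mulgVK, gmulVr. reflexivity. Qed.

Lemma invg1 : ginv (@gone G) = gone.
Proof. apply invg_unique, gmul1l. Qed.

Ltac gsimpl :=
  repeat progress rewrite ?invgM, ?invgK, ?invg1, ?gmul1l, ?gmul1r, ?gmulA,
    ?mulgKV, ?mulgVK, ?gmulVl, ?gmulVr.

Lemma subgroup_invMg (K : G -> Prop) (a b : G) :
  is_subgroup G K -> K (gmul (ginv a) b) -> K (gmul (ginv b) a).
Proof.
  intros (_ & _ & KV) Hab. apply KV in Hab. rewrite invgM, invgK in Hab.
  exact Hab.
Qed.

Lemma subgroup_same_coset (K : G -> Prop) (g c c' : G) :
  is_subgroup G K -> K (gmul (ginv g) c) -> K (gmul (ginv g) c') ->
  K (gmul (ginv c) c').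
Proof.
  intros HK Hc Hc'. pose proof HK as (_ & KM & _).
  replace (gmul (ginv c) c') with
    (gmul (gmul (ginv c) g) (gmul (ginv g) c')) by (gsimpl; reflexivity).
  apply KM; [apply subgroup_invMg|]; assumption.
Qed.

Lemma zpow_succ (y : G) n : zpow G y (Z.succ n) = gmul (zpow G y n) y.
Proof.
  destruct n as [|p|p].
  - reflexivity.
  - change (npow G y (Pos.to_nat (p + 1)) = gmul (npow G y (Pos.to_nat p)) y).
    rewrite Pos.add_1_r, Pos2Nat.inj_succ. reflexivity.
  - destruct (Pos.eq_dec p 1) as [->|Hp].
    + unfold npow. simpl. rewrite gmul1l, gmulVl. reflexivity.
    + rewrite <- (Pos.succ_pred p Hp).
      replace (Z.succ (Z.neg (Pos.succ (Pos.pred p)))) with (Z.neg (Pos.pred p)) by lia.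
      simpl. rewrite Pos2Nat.inj_succ. unfold npow. simpl. rewrite mulgKV.
      reflexivity.
Qed.

Lemma zpow_pred (y : G) n : zpow G y (Z.pred n) = gmul (zpow G y n) (ginv y).
Proof. rewrite <- (Z.succ_pred n) at 2. rewrite zpow_succ. gsimpl. reflexivity. Qed.

Lemma zpowD (y : G) m n : zpow G y (m + n) = gmul (zpow G y m) (zpow G y n).
Proof.
  induction n using Z.peano_ind.
  - rewrite Z.add_0_r. simpl. gsimpl. reflexivity.
  - rewrite Z.add_succ_r, !zpow_succ, IHn. gsimpl. reflexivity.
  - rewrite Z.add_pred_r, !zpow_pred, IHn. gsimpl. reflexivity.
Qed.

Lemma zpow1 (y : G) : zpow G y 1 = y.
Proof. apply gmul1l. Qed.

Lemma zpowN (y : G) n : zpow G y (- n) = ginv (zpow G y n).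
Proof. symmetry. apply invg_unique. rewrite <- zpowD, Z.add_opp_diag_r. reflexivity. Qed.

Lemma subgroup_zpow (K : G -> Prop) (y : G) n :
  is_subgroup G K -> K y -> K (zpow G y n).
Proof.
  intros (K1 & KM & KV) Hy.
  assert (Knpow : forall z k, K z -> K (npow G z k)).
  { intros z k Hz. induction k; simpl; auto. }
  destruct n; simpl; auto.
Qed.

Definition conjg (g w : G) : G := gmul (gmul (ginv g) w) g.

Lemma conjg1 (g : G) : conjg g gone = gone.
Proof. unfold conjg. gsimpl. reflexivity. Qed.

Lemma conjgM (g a b : G) : conjg g (gmul a b) = gmul (conjg g a) (conjg g b).
Proof. unfold conjg. gsimpl. reflexivity. Qed.

Lemma conjgV (g a : G) : conjg g (ginv a) = ginv (conjg g a).
Proof. unfold conjg. gsimpl. reflexivity. Qed.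

Lemma conjg_zpow (g a : G) n : conjg g (zpow G a n) = zpow G (conjg g a) n.
Proof.
  assert (Hnpow : forall z k, conjg g (npow G z k) = npow G (conjg g z) k).
  { intros z k. induction k; simpl. apply conjg1. rewrite conjgM, IHk. reflexivity. }
  destruct n; simpl. apply conjg1. apply Hnpow. rewrite Hnpow, conjgV. reflexivity.
Qed.

Lemma conjgMl (a b w : G) : conjg (gmul a b) w = conjg b (conjg a w).
Proof. unfold conjg. gsimpl. reflexivity. Qed.

Definition normalizes (K : G -> Prop) (g : G) : Prop :=
  forall w, K w -> K (conjg g w) /\ K (conjg (ginv g) w).

Lemma normalizer_subgroup (K : G -> Prop) : is_subgroup G (normalizes K).
Proof.
  split; [|split].
  - intros w Hw. unfold conjg. gsimpl. auto.
  - intros a b Ha Hb w Hw. rewrite conjgMl, invgM, conjgMl.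
    split; [apply Hb, Ha | apply Ha, Hb]; exact Hw.
  - intros a Ha w Hw. rewrite invgK. split; apply Ha; exact Hw.
Qed.

Lemma down_ind (h : nat) (P : nat -> Prop) :
  P h -> (forall m, (m < h)%nat -> P (S m) -> P m) ->
  forall m, (m <= h)%nat -> P m.
Proof.
  intros Ph Pstep m Hm. remember (h - m)%nat as d eqn:Hd. revert m Hm Hd.
  induction d as [|d IHd]; intros m Hm Hd.
  - replace m with h by lia. exact Ph.
  - apply Pstep; [lia|]. apply IHd; lia.
Qed.

Section MalcevBasis.

Variable h : nat.
Variable x : nat -> G.

Fixpoint segment (l : nat -> Z) (a k : nat) : G :=
  match k with
  | O => gone
  | S k => gmul (zpow G (x a) (l a)) (segment l (S a) k)
  end.

Lemma segment_ext l l' a k :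
  (forall i, (a <= i < a + k)%nat -> l i = l' i) -> segment l a k = segment l' a k.
Proof.
  revert a; induction k as [|k IHk]; intros a E; simpl; [reflexivity|].
  rewrite E by lia. f_equal. apply IHk. intros i Hi. apply E. lia.
Qed.

Lemma segmentS_r l a k :
  segment l a (S k) = gmul (segment l a k) (zpow G (x (a + k)%nat) (l (a + k)%nat)).
Proof.
  revert a; induction k as [|k IHk]; intros a; simpl.
  - rewrite Nat.add_0_r. gsimpl. reflexivity.
  - simpl in IHk. rewrite IHk, <- Nat.add_succ_comm. gsimpl. reflexivity.
Qed.

Lemma word_segment l n : word G x l n = segment l 0 n.
Proof. induction n as [|n IHn]; [reflexivity|]. rewrite segmentS_r. simpl. rewrite IHn. reflexivity. Qed.

Lemma segment_cat l a k1 k2 :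
  segment l a (k1 + k2) = gmul (segment l a k1) (segment l (a + k1) k2).
Proof.
  revert a; induction k1 as [|k1 IHk1]; intros a; simpl.
  - rewrite Nat.add_0_r. gsimpl. reflexivity.
  - rewrite IHk1, <- Nat.add_succ_comm. gsimpl. reflexivity.
Qed.

Lemma segment0 l a k : (forall i, (a <= i < a + k)%nat -> l i = 0) -> segment l a k = gone.
Proof.
  intros E. rewrite (segment_ext l (fun _ => 0)) by exact E. clear E.
  revert a; induction k as [|k IHk]; intros a; simpl; [reflexivity|].
  rewrite IHk. apply gmul1l.
Qed.

Lemma segment_tail l m : (m < h)%nat ->
  segment l m (h - m) = gmul (zpow G (x m) (l m)) (segment l (S m) (h - S m)).
Proof. intros Hm. replace (h - m)%nat with (S (h - S m)) by lia. reflexivity. Qed.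

Definition update (l : nat -> Z) (m : nat) (v : Z) : nat -> Z :=
  fun i => if Nat.eqb i m then v else l i.

Lemma segment_tail_update l m v : (m < h)%nat ->
  segment (update l m v) m (h - m) = gmul (zpow G (x m) v) (segment l (S m) (h - S m)).
Proof.
  intros Hm. rewrite segment_tail by exact Hm. unfold update at 1.
  rewrite Nat.eqb_refl. f_equal. apply segment_ext. intros i Hi.
  unfold update. destruct (Nat.eqb_spec i m); [lia | reflexivity].
Qed.

Definition tail m (g : G) : Prop := exists l, g = segment l m (h - m).

Lemma tail_cons m g : (m < h)%nat ->
  tail m g <-> exists a w, tail (S m) w /\ g = gmul (zpow G (x m) a) w.
Proof.
  intros Hm. split.
  - intros [l ->]. exists (l m), (segment l (S m) (h - S m)).
    split; [exists l; reflexivity | apply segment_tail; exact Hm].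
  - intros (a & w & [l ->] & ->). exists (update l m a).
    symmetry. apply segment_tail_update. exact Hm.
Qed.

Lemma tail1 m : tail m gone.
Proof. exists (fun _ => 0). symmetry. apply segment0. reflexivity. Qed.

Lemma tail_le m k g : (m <= k <= h)%nat -> tail k g -> tail m g.
Proof.
  intros [Hmk Hkh]. induction Hmk as [|k Hmk IH]; intros Hg; [exact Hg|].
  apply IH; [lia|]. apply tail_cons; [lia|].
  exists 0, g. split; [exact Hg | apply eq_sym, gmul1l].
Qed.

Lemma tail_gen m k : (m <= k < h)%nat -> tail m (x k).
Proof.
  intros Hk. apply tail_le with k; [lia|]. apply tail_cons; [lia|].
  exists 1, gone. split; [apply tail1 | rewrite zpow1, gmul1r; reflexivity].
Qed.

Lemma tail_h g : tail h g -> g = gone.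
Proof. intros [l ->]. rewrite Nat.sub_diag. reflexivity. Qed.

Lemma tail0_word g : tail 0 g <-> exists l, g = word G x l h.
Proof.
  unfold tail. rewrite Nat.sub_0_r.
  split; intros [l E]; exists l; rewrite E, ?word_segment; reflexivity.
Qed.

Lemma tail_cons_word m d w : (m < h)%nat -> tail (S m) w ->
  exists L, gmul (zpow G (x m) d) w = word G x L h /\ L m = d.
Proof.
  intros Hm [l ->]. set (L := fun i => if Nat.ltb i m then 0 else update l m d i).
  exists L. split.
  - rewrite word_segment. replace h with (m + (h - m))%nat at 2 by lia.
    rewrite segment_cat, (segment0 L 0 m), gmul1l.
    + rewrite <- segment_tail_update by exact Hm. apply segment_ext.
      intros i Hi. unfold L. destruct (Nat.ltb_spec i m); [lia | reflexivity].
    + intros i Hi. unfold L. destruct (Nat.ltb_spec i m); [reflexivity | lia].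
  - unfold L, update. rewrite Nat.ltb_irrefl, Nat.eqb_refl. reflexivity.
Qed.

Lemma word_single m v : (m < h)%nat ->
  word G x (update (fun _ => 0) m v) h = zpow G (x m) v.
Proof.
  intros Hm. rewrite word_segment. replace h with (m + (h - m))%nat at 1 by lia.
  rewrite segment_cat, segment0, gmul1l, Nat.add_0_l, segment_tail_update, segment0,
    gmul1r by (try exact Hm; intros i Hi; unfold update;
               destruct (Nat.eqb_spec i m); lia).
  reflexivity.
Qed.

Definition tail_normal m : Prop :=
  is_subgroup G (tail m) /\ forall i, (i < m)%nat -> normalizes (tail m) (x i).

Lemma tail_normal_h : tail_normal h.
Proof.
  split; [split; [|split]|].
  - apply tail1.
  - intros a b Ha Hb. rewrite (tail_h a Ha), (tail_h b Hb), gmul1l. apply tail1.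
  - intros a Ha. rewrite (tail_h a Ha), invg1. apply tail1.
  - intros i _ w Hw. rewrite (tail_h w Hw), !conjg1. split; apply tail1.
Qed.

Lemma tail_normal_zpow m n : (m < h)%nat -> tail_normal (S m) ->
  normalizes (tail (S m)) (zpow G (x m) n).
Proof.
  intros Hm [_ Hnorm]. apply subgroup_zpow, Hnorm; [apply normalizer_subgroup | lia].
Qed.

Lemma tail_subgroup_step m : (m < h)%nat -> tail_normal (S m) -> is_subgroup G (tail m).
Proof.
  intros Hm HN. pose proof HN as [(_ & TM & TV) _].
  split; [|split].
  - apply tail1.
  - intros g1 g2 H1 H2. apply tail_cons in H1, H2; try exact Hm.
    destruct H1 as (a & w1 & Hw1 & ->), H2 as (b & w2 & Hw2 & ->).
    apply tail_cons; [exact Hm|].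
    exists (a + b), (gmul (conjg (zpow G (x m) b) w1) w2). split.
    + apply TM; [apply tail_normal_zpow|]; assumption.
    + rewrite zpowD. unfold conjg. gsimpl. reflexivity.
  - intros g Hg. apply tail_cons in Hg; [|exact Hm]. destruct Hg as (a & w & Hw & ->).
    apply tail_cons; [exact Hm|].
    exists (- a), (conjg (zpow G (x m) (- a)) (ginv w)). split.
    + apply tail_normal_zpow; [exact Hm | exact HN | apply TV, Hw].
    + rewrite zpowN. unfold conjg. gsimpl. reflexivity.
Qed.

Hypothesis Hcomm : forall i j, (i < j)%nat -> (j < h)%nat ->
  gen G (fun y => exists k, (j < k)%nat /\ (k < h)%nat /\ y = x k) (comm G (x i) (x j)).

Lemma comm_in_tail i m : (i < m < h)%nat -> tail_normal (S m) ->
  tail (S m) (comm G (x i) (x m)).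
Proof.
  intros Him [HT _]. apply Hcomm; [lia | lia | exact HT |].
  intros y (k & Hk & Hkh & ->). apply tail_gen. lia.
Qed.

Lemma conjg_gen_tail i m : (i < m < h)%nat -> tail_normal (S m) ->
  tail m (conjg (x i) (x m)) /\ tail m (conjg (ginv (x i)) (x m)).
Proof.
  intros Him HN. pose proof HN as [HTS HnormS].
  assert (Hc : tail (S m) (comm G (x i) (x m))) by (apply comm_in_tail; assumption).
  split; apply tail_cons; try lia.
  - exists 1, (ginv (comm G (x i) (x m))). split; [apply HTS, Hc|].
    rewrite zpow1. unfold conjg, comm. gsimpl. reflexivity.
  - exists 1, (conjg (ginv (x i)) (comm G (x i) (x m))). split.
    + apply HnormS; [lia | exact Hc].
    + rewrite zpow1. unfold conjg, comm. gsimpl. reflexivity.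
Qed.

Lemma tail_normal_step m : (m < h)%nat -> tail_normal (S m) -> tail_normal m.
Proof.
  intros Hm HN. pose proof (tail_subgroup_step m Hm HN) as HT.
  pose proof HN as [_ HnormS]. split; [exact HT|].
  intros i Hi w Hw. pose proof HT as (_ & TM & _).
  destruct (conjg_gen_tail i m ltac:(lia) HN) as [Gl Gr].
  apply tail_cons in Hw; [|exact Hm]. destruct Hw as (a & w' & Hw' & ->).
  rewrite !conjgM, !conjg_zpow.
  split; apply TM; try (apply subgroup_zpow; assumption);
    apply tail_le with (S m); try lia; apply HnormS; auto; lia.
Qed.

Lemma tail_normal_all m : (m <= h)%nat -> tail_normal m.
Proof. revert m. exact (down_ind h _ tail_normal_h tail_normal_step). Qed.

Variable q : nat -> Z.
Hypothesis Hq : forall i, (i < h)%nat -> 0 < q i.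

Definition in_H (g : G) : Prop := exists l, g = word G x (fun i => q i * l i) h.

Hypothesis HH : is_subgroup G in_H.

Definition box m (c : G) : Prop :=
  exists k, (forall i, (m <= i < h)%nat -> 0 <= k i < q i) /\ c = segment k m (h - m).

Lemma box_cons m a c : (m < h)%nat -> 0 <= a < q m -> box (S m) c ->
  box m (gmul (zpow G (x m) a) c).
Proof.
  intros Hm Ha [k [Hk ->]]. exists (update k m a). split.
  - intros i Hi. unfold update. destruct (Nat.eqb_spec i m) as [->|]; [exact Ha|].
    apply Hk. lia.
  - symmetry. apply segment_tail_update. exact Hm.
Qed.

Lemma box_uncons m c : (m < h)%nat -> box m c ->
  exists a d, 0 <= a < q m /\ box (S m) d /\ tail (S m) d /\ c = gmul (zpow G (x m) a) d.
Proof.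
  intros Hm [k [Hk ->]]. exists (k m), (segment k (S m) (h - S m)).
  split; [apply Hk; lia|]. split; [|split].
  - exists k. split; [intros i Hi; apply Hk; lia | reflexivity].
  - exists k. reflexivity.
  - apply segment_tail. exact Hm.
Qed.

Lemma box0_word c :
  box 0 c <-> exists k, (forall i, (i < h)%nat -> 0 <= k i < q i) /\ c = word G x k h.
Proof.
  unfold box. rewrite Nat.sub_0_r.
  split; intros [k [Hk E]]; exists k; (split; [intros i Hi; apply Hk; lia|]);
    rewrite E, ?word_segment; reflexivity.
Qed.

Lemma box_h : box h gone.
Proof. exists (fun _ => 0). split; [lia | rewrite Nat.sub_diag; reflexivity]. Qed.

Lemma in_H_zpow m t : (m < h)%nat -> in_H (zpow G (x m) (q m * t)).
Proof.
  intros Hm. exists (update (fun _ => 0) m t).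
  rewrite <- word_single by exact Hm. rewrite !word_segment.
  apply segment_ext. intros i _. unfold update.
  destruct (Nat.eqb_spec i m) as [->|]; lia.
Qed.

Hypothesis Huniq : forall l l' : nat -> Z, word G x l h = word G x l' h ->
  forall i, (i < h)%nat -> l i = l' i.

Lemma in_H_lead_dvd m d w : (m < h)%nat -> tail (S m) w ->
  in_H (gmul (zpow G (x m) d) w) -> exists t, d = q m * t.
Proof.
  intros Hm Hw [l Hl]. destruct (tail_cons_word m d w Hm Hw) as (L & EL & <-).
  exists (l m). rewrite EL in Hl. apply (Huniq _ _ Hl m Hm).
Qed.

Lemma coset_rep_exists m : (m <= h)%nat ->
  forall w, tail m w -> exists c, box m c /\ in_H (gmul (ginv c) w).
Proof.
  revert m. refine (down_ind h _ _ _).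
  - intros w Hw. exists gone. split; [apply box_h|].
    rewrite (tail_h w Hw), invg1, gmul1l. apply HH.
  - intros m Hm IH w Hw. apply tail_cons in Hw; [|exact Hm].
    destruct Hw as (a & w' & Hw' & ->).
    set (t := a / q m). set (k := a mod q m).
    assert (Ea : a = k + q m * t).
    { unfold k, t. rewrite Z.add_comm. apply Z.div_mod. specialize (Hq m Hm). lia. }
    set (y := conjg (ginv (zpow G (x m) (q m * t))) w').
    assert (Hy : tail (S m) y).
    { apply (tail_normal_zpow m (q m * t) Hm (tail_normal_all (S m) Hm) w' Hw'). }
    destruct (IH y Hy) as (c & Hc & HcH).
    exists (gmul (zpow G (x m) k) c). split.
    + apply box_cons; [exact Hm | apply Z.mod_pos_bound, Hq, Hm | exact Hc].
    + (* x_m^(q_m t) lies in H and is moved to the right through T_(m+1). *)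
      replace (gmul (ginv (gmul (zpow G (x m) k) c)) (gmul (zpow G (x m) a) w'))
        with (gmul (gmul (ginv c) y) (zpow G (x m) (q m * t))).
      * apply HH; [exact HcH | apply in_H_zpow, Hm].
      * rewrite Ea, zpowD. unfold y, conjg. gsimpl. reflexivity.
Qed.

Lemma coset_rep_unique m : (m <= h)%nat ->
  forall c c', box m c -> box m c' -> in_H (gmul (ginv c) c') -> c = c'.
Proof.
  revert m. refine (down_ind h _ _ _).
  - intros c c' [k [_ ->]] [k' [_ ->]] _. rewrite Nat.sub_diag. reflexivity.
  - intros m Hm IH c c' Hc Hc' HcH.
    destruct (box_uncons m c Hm Hc) as (a & d & Ha & Hd & Td & ->).
    destruct (box_uncons m c' Hm Hc') as (b & d' & Hb & Hd' & Td' & ->).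
    pose proof (tail_normal_all (S m) Hm) as HN.
    pose proof HN as [(_ & TM & TV) _].
    set (e := b - a).
    assert (Tde : tail (S m) (gmul (conjg (zpow G (x m) e) (ginv d)) d')).
    { apply TM; [apply tail_normal_zpow, TV | ]; assumption. }
    assert (He : in_H (gmul (zpow G (x m) e) (gmul (conjg (zpow G (x m) e) (ginv d)) d'))).
    { replace (gmul (zpow G (x m) e) (gmul (conjg (zpow G (x m) e) (ginv d)) d'))
        with (gmul (ginv (gmul (zpow G (x m) a) d)) (gmul (zpow G (x m) b) d'));
        [exact HcH|].
      replace b with (a + e) by (unfold e; lia). rewrite zpowD. unfold conjg.
      gsimpl. reflexivity. }
    destruct (in_H_lead_dvd m e _ Hm Tde He) as [t Et].
    assert (Eab : b = a).
    { specialize (Hq m Hm). unfold e in Et.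
      destruct (Z.lt_trichotomy t 0) as [Ht | [-> | Ht]]; nia. }
    subst b. rewrite (IH d d' Hd Hd'); [reflexivity|].
    replace (gmul (ginv d) d')
      with (gmul (ginv (gmul (zpow G (x m) a) d)) (gmul (zpow G (x m) a) d'))
      by (gsimpl; reflexivity).
    exact HcH.
Qed.

End MalcevBasis.
End Groups.

Arguments gmul : clear implicits. Arguments gone : clear implicits.
Arguments ginv : clear implicits.

(* Indices are shifted: x_1..x_h of the paper are x 0 .. x (h-1). *)
Theorem lemma5p5 (G : Group) (h : nat) (x : nat -> G) (q : nat -> Z)
  (Htf : torsion_free G) (Hnil : nilpotent G) (Hh : hirsch_length G h)
  (Hgen : forall g, gen G (fun y => exists i, (i < h)%nat /\ y = x i) g)
  (Hex : forall g : G, exists l : nat -> Z, g = word G x l h)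
  (Huniq : forall l l' : nat -> Z, word G x l h = word G x l' h ->
             forall i, (i < h)%nat -> l i = l' i)
  (Hcomm : forall i j, (i < j)%nat -> (j < h)%nat ->
             gen G (fun y => exists k, (j < k)%nat /\ (k < h)%nat /\ y = x k)
                 (comm G (x i) (x j)))
  (Hq : forall i, (i < h)%nat -> 0 < q i)
  (HH : is_subgroup G (fun g => exists l : nat -> Z,
                         g = word G x (fun i => q i * l i) h)) :
  forall g : G, exists c : G,
    ((exists k : nat -> Z, (forall i, (i < h)%nat -> 0 <= k i < q i) /\
        c = word G x k h) /\
     (exists l : nat -> Z, gmul G (ginv G g) c = word G x (fun i => q i * l i) h)) /\
    (forall c' : G,
       (exists k : nat -> Z, (forall i, (i < h)%nat -> 0 <= k i < q i) /\
          c' = word G x k h) ->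
       (exists l : nat -> Z, gmul G (ginv G g) c' = word G x (fun i => q i * l i) h) ->
       c' = c).
Proof.
  intros g.
  assert (Hg : tail G h x 0 g) by apply tail0_word, Hex.
  destruct (coset_rep_exists G h x Hcomm q Hq HH 0 (Nat.le_0_l h) g Hg)
    as (c & Hc & HcH).
  exists c. split; [split|].
  - apply box0_word. exact Hc.
  - apply subgroup_invMg; assumption.
  - intros c' Hc' Hc'H. symmetry.
    apply (coset_rep_unique G h x Hcomm q Hq Huniq 0 (Nat.le_0_l h));
      [exact Hc | apply box0_word, Hc' |].
    apply subgroup_same_coset with g; [exact HH | apply subgroup_invMg |]; assumption.
Qed.
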